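(* Let $\gamma\in(0,1)$ and $c\ge 0$. Define the deterministic sequence $\bar v^0=0$ and, for $n\ge 1$, $$\hat v^n = c+\gamma \bar v^{n-1},\qquad \bar v^n=\Big(1-\tfrac1n\Big)\bar v^{n-1}+\tfrac1n \hat v^n .$$ Then for all $n=0,1,2,\dots$, $$\bar v^n \ \ge\ \frac{c}{1-\gamma}\Big(1-(n+1)^{-(1-\gamma)}\Big).$$
   Context: This is approximate value iteration for a single-state, single-action problem with deterministic one-period reward $c$, discount factor $\gamma$, initial approximation $0$, and stepsize $\alpha_{n-1}=1/n$. The true value is $c/(1-\gamma)$. *)

From Stdlib Require Import Reals.
Open Scope R_scope.

Definition vhat (c gamma vprev : R) : R := c + gamma * vprev.

Fixpoint vbar (c gamma : R) (n : nat) : R :=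
  match n with
  | O => 0
  | S m =>
      let k := INR (S m) in
      (1 - 1 / k) * vbar c gamma m + (1 / k) * vhat c gamma (vbar c gamma m)
  end.

(* With a := 1 - gamma the recursion reads v(n+1) = (1 - a/(n+1)) v(n) + c/(n+1).
   The lower bound (c/a) (1 - (n+1)^-a) is an invariant of this recursion because
   (n+1)^-a (1 - a/(n+1)) <= (n+2)^-a, which follows from 1 + y <= exp y and
   ln (n+2) - ln (n+1) <= 1/(n+1). *)
From Stdlib Require Import Reals Lra.
Open Scope R_scope.

Lemma ln_succ_le (x : R) : 0 < x -> ln (x + 1) <= ln x + / x.
Proof.
  intro Hx; apply Rnot_lt_le; intro Hlt.
  apply exp_increasing in Hlt.
  rewrite exp_plus, !exp_ln in Hlt by lra.
  assert (Hsucc : x + 1 = x * (1 + / x)) by (field; lra).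
  assert (Hexp : x * (1 + / x) <= x * exp (/ x))
    by (apply Rmult_le_compat_l; [lra | apply exp_ineq1_le]).
  lra.
Qed.

Lemma Rpower_opp_succ_ge (a x : R) : 0 <= a -> 0 < x ->
  Rpower x (- a) * (1 - a / x) <= Rpower (x + 1) (- a).
Proof.
  intros Ha Hx; unfold Rpower.
  set (d := ln (x + 1) - ln x).
  replace (- a * ln (x + 1)) with (- a * ln x + - a * d) by (unfold d; ring).
  rewrite exp_plus.
  apply Rmult_le_compat_l; [left; apply exp_pos |].
  assert (Had : a * d <= a / x)
    by (apply Rmult_le_compat_l; [lra | pose proof (ln_succ_le x Hx); unfold d; lra]).
  pose proof (exp_ineq1_le (- a * d)); lra.
Qed.

Lemma vbar_S (c gamma : R) (n : nat) :
  vbar c gamma (S n) =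
  (1 - (1 - gamma) / (INR n + 1)) * vbar c gamma n + c / (INR n + 1).
Proof.
  cbn [vbar]; rewrite S_INR; unfold vhat.
  pose proof (pos_INR n); field; lra.
Qed.

Lemma lower_bound_step (a c k v : R) : 0 < a -> a <= k -> 0 <= c ->
  c / a * (1 - Rpower k (- a)) <= v ->
  c / a * (1 - Rpower (k + 1) (- a)) <= (1 - a / k) * v + c / k.
Proof.
  intros Ha Hak Hc Hv.
  assert (Hw : 0 <= 1 - a / k).
  { assert (Hak1 : a / k <= 1).
    { apply (Rmult_le_reg_r k); [lra |].
      unfold Rdiv; rewrite Rmult_assoc, Rinv_l by lra; lra. }
    lra. }
  assert (Hca : 0 <= c / a)
    by (apply Rmult_le_pos; [lra | left; apply Rinv_0_lt_compat; lra]).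
  pose proof (Rpower_opp_succ_ge a k (Rlt_le _ _ Ha) (Rlt_le_trans _ _ _ Ha Hak)) as Hpow.
  assert (Hbound : (1 - a / k) * (c / a * (1 - Rpower k (- a))) <= (1 - a / k) * v)
    by (apply Rmult_le_compat_l; lra).
  assert (Hmono : c / a * (Rpower k (- a) * (1 - a / k)) <= c / a * Rpower (k + 1) (- a))
    by (apply Rmult_le_compat_l; lra).
  assert (Hsplit : (1 - a / k) * (c / a * (1 - Rpower k (- a))) + c / k
                   = c / a - c / a * (Rpower k (- a) * (1 - a / k)))
    by (field; lra).
  lra.
Qed.

Theorem theorem1 (gamma c : R) (hg0 : 0 < gamma) (hg1 : gamma < 1) (hc : 0 <= c) :
  forall n : nat,
    vbar c gamma n >= c / (1 - gamma) * (1 - Rpower (INR n + 1) (- (1 - gamma))).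
Proof.
  intro n; apply Rle_ge; induction n as [| n IH].
  - cbn [vbar INR]; unfold Rpower.
    rewrite Rplus_0_l, ln_1, Rmult_0_r, exp_0; lra.
  - rewrite vbar_S, S_INR.
    apply lower_bound_step; [lra | pose proof (pos_INR n); lra | exact hc | exact IH].
Qed.
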